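(* Let $n$ and $m_1,\dots,m_n$ be positive integers. Define $f(1)=m_1$ and $f(i)=m_i\left(2\sum_{j=1}^{i-1}f(j)+1\right)$ for $2\le i\le n$, let $x_i=f(i)/m_i$ for $i\in[n]$, and let $\phi(m_1,\dots,m_n)=\sum_{i=1}^n f(i)$. For each $\mathbf{a}=(a_1,\dots,a_n)\in\mathcal{A}:=[m_1]\times\cdots\times[m_n]$ let $$\mathcal{D}_{\mathbf{a}}=\left\{\alpha_1a_1x_1+\cdots+\alpha_na_nx_n \bmod v \;:\; \alpha_i\in\{-1,1\},\ i\in[n]\right\}\subseteq\mathbb{Z}_v,$$ and $\mathfrak{D}=\{\mathcal{D}_{\mathbf{a}}:\mathbf{a}\in\mathcal{A}\}$. Then for every odd positive integer $v\ge 2\phi(m_1,\dots,m_n)+1$, the pair $(\mathbb{Z}_v,\mathfrak{D})$ is a $\left(v,2^n,\prod_{i=1}^n m_i\right)$ non-half-sum disjoint packing.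
   Context: $[m]=\{1,\dots,m\}$. Arithmetic is in $\mathbb{Z}_v$, the integers modulo the odd integer $v$; the half-sum of $x,y\in\mathbb{Z}_v$ is $(x+y)\cdot 2^{-1}$. A $(v,g,b)$ non-half-sum disjoint packing is a pair $(\mathbb{Z}_v,\mathfrak{D})$ where $\mathfrak{D}$ is a family of $b$ subsets (''blocks'') of $\mathbb{Z}_v$, each of size $g$, such that (i) any two different blocks are disjoint, and (ii) for each block $\mathcal{D}\in\mathfrak{D}$ and any two different elements $x,y\in\mathcal{D}$, the half-sum $(x+y)/2$ does not belong to any block of $\mathfrak{D}$. *)

From HB Require Import structures.
From mathcomp Require Import all_boot all_order all_algebra.
Set Implicit Arguments. Unset Strict Implicit. Unset Printing Implicit Defensive.
Import GRing.Theory.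
Local Open Scope ring_scope.

(* Partial sums S k = f(1) + ... + f(k), with m 1-indexed (m i for i in [n]). *)
Fixpoint Ssum (m : nat -> nat) (k : nat) : nat :=
  match k with
  | 0 => 0
  | k'.+1 => (Ssum m k' + m k'.+1 * (2 * Ssum m k' + 1))%N
  end.

Definition fval (m : nat -> nat) (i : nat) : nat :=
  (m i * (2 * Ssum m i.-1 + 1))%N.

Definition xval (m : nat -> nat) (i : nat) : nat := (fval m i %/ m i)%N.

Definition phi (m : nat -> nat) (n : nat) : nat := (\sum_(1 <= i < n.+1) fval m i)%N.

(* Block D_a : index i : 'I_n stands for i+1 in [n]; a i : 'I_(m (i+1))
   stands for a_{i+1} = (a i) + 1 in [m_{i+1}]. *)
Definition block (v n : nat) (m : nat -> nat)
    (a : {dffun forall i : 'I_n, 'I_(m i.+1)}) : {set 'Z_v} :=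
  [set \sum_(i < n) (-1) ^+ (alpha i : nat) *
          (((a i).+1 * xval m i.+1)%N)%:R | alpha : {ffun 'I_n -> bool}].

Definition lemma3_family (v n : nat) (m : nat -> nat) : {set {set 'Z_v}} :=
  [set @block v n m a | a : {dffun forall i : 'I_n, 'I_(m i.+1)}].

Definition nhs_disjoint_packing (v g b : nat) (F : {set {set 'Z_v}}) : Prop :=
  [/\ #|F| = b,
      (forall B, B \in F -> #|B| = g),
      (forall B1 B2, B1 \in F -> B2 \in F -> B1 != B2 -> [disjoint B1 & B2]) &
      (forall B x y, B \in F -> x \in B -> y \in B -> x != y ->
         forall B', B' \in F -> (x + y) * (2%:R)^-1 \notin B')].

(* With S_k = f(1) + ... + f(k), the weights x_(k+1) = 2 S_k + 1 form a mixed
   radix: since S_(k+1) = S_k + m_(k+1) x_(k+1), a sum of c_i x_i with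
   |c_i| <= t m_i has absolute value at most t S_k, which for t = 2 is below the
   next weight.  Hence sum_i c_i x_i = 0 with |c_i| <= 2 m_i forces every c_i to
   vanish, i.e. integer combinations with |c_i| <= m_i are determined by their
   digits.  These combinations lie in [-phi, phi] and v > 2 phi, so the same
   holds modulo v.  The elements of D_a are the combinations with digits
   +-a_i, so blocks have 2^n elements and distinct blocks are disjoint; half of
   the sum of two distinct elements of D_a (2 is invertible as v is odd) has
   digits in {0, +-a_i} with at least one digit 0, so it lies in no block. *)

From mathcomp Require Import all_boot all_order all_algebra zify ring.
Import Order.TTheory GRing.Theory Num.Theory.
Set Implicit Arguments. Unset Strict Implicit. Unset Printing Implicit Defensive.
Local Open Scope ring_scope.

Lemma Zp_nat_eq0 v k : (1 < v)%N -> ((k%:R : 'Z_v) == 0) = (v %| k)%N.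
Proof. by move=> v_gt1; rewrite -val_eqE /= val_Zp_nat. Qed.

Lemma Zp_int_eq0 v (k : int) : (1 < v)%N -> ((k%:~R : 'Z_v) == 0) = (v %| k)%Z.
Proof.
move=> v_gt1; case: k => k; first exact: Zp_nat_eq0.
by rewrite NegzE rmorphN oppr_eq0 /= Zp_nat_eq0.
Qed.

Lemma Zp_intr_inj v (p q : int) : (1 < v)%N -> `|p - q| < v%:Z ->
  (p%:~R : 'Z_v) = q%:~R -> p = q.
Proof.
move=> v_gt1 small /eqP; rewrite -subr_eq0 -rmorphB Zp_int_eq0 // => dv.
apply/eqP; rewrite -subr_eq0; apply: contraTT small => nz.
rewrite -leNgt; move: dv nz; rewrite /dvdz; move: (p - q) => k dv nz.
by rewrite -abszE lez_nat dvdn_leq // absz_gt0.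
Qed.

Definition weight (m : nat -> nat) (k : nat) : nat := (2 * Ssum m k + 1)%N.

Lemma SsumS m k : Ssum m k.+1 = (Ssum m k + m k.+1 * weight m k)%N.
Proof. by []. Qed.

Lemma xval_weight m k : (0 < m k.+1)%N -> xval m k.+1 = weight m k.
Proof. by move=> m_gt0; rewrite /xval /fval mulKn. Qed.

Lemma phi_Ssum m n : phi m n = Ssum m n.
Proof.
rewrite /phi; elim: n => [|n IHn]; first by rewrite big_geq.
by rewrite big_nat_recr //= IHn.
Qed.

Lemma big_ord_ltS (V : nmodType) n (F : 'I_n -> V) k (lt_kn : (k < n)%N) :
  \sum_(i < n | (i < k.+1)%N) F i = F (Ordinal lt_kn) + \sum_(i < n | (i < k)%N) F i.
Proof.
rewrite (bigD1 (Ordinal lt_kn)) //=; congr (_ + _); apply: eq_bigl => i.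
by rewrite -val_eqE /= ltnS; case: ltngtP.
Qed.

Section WeightedSums.
Variables (m : nat -> nat) (n : nat).
Implicit Types c d : 'I_n -> int.

Definition wsum c k : int := \sum_(i < n | (i < k)%N) c i * (weight m i)%:Z.

Lemma wsumS c k (lt_kn : (k < n)%N) :
  wsum c k.+1 = c (Ordinal lt_kn) * (weight m k)%:Z + wsum c k.
Proof. exact: big_ord_ltS. Qed.

Lemma wsum_full c : wsum c n = \sum_(i < n) c i * (weight m i)%:Z.
Proof. by apply: eq_bigl => i; rewrite ltn_ord. Qed.

Lemma wsum_bound c t k : (forall i, `|c i| <= (t * m i.+1)%:Z) -> (k <= n)%N ->
  `|wsum c k| <= (t * Ssum m k)%:Z.
Proof.
move=> c_le; elim: k => [|k IHk] le_kn; first by rewrite /wsum big_pred0.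
rewrite wsumS SsumS mulnDr PoszD addrC (le_trans (ler_normD _ _)) //.
rewrite lerD ?IHk 1?ltnW // normrM mulnA PoszM.
by rewrite ler_wpM2r // c_le.
Qed.

Lemma wsum_eq0 c k : (forall i, `|c i| <= (2 * m i.+1)%:Z) -> (k <= n)%N ->
  wsum c k = 0 -> forall i : 'I_n, (i < k)%N -> c i = 0.
Proof.
move=> c_le; elim: k => [|k IHk] le_kn; first by [].
have le_kn' := ltnW le_kn.
rewrite wsumS => sum0.
(* |c_k| * weight k = |wsum c k| <= 2 * Ssum k < weight k *)
have ck0 : c (Ordinal le_kn) = 0.
  have := wsum_bound c_le le_kn'; move: sum0; rewrite /weight.
  move: (wsum c k) (c _) => r ck; nia.
move: sum0; rewrite ck0 mul0r add0r => /(IHk le_kn') c0 i.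
rewrite ltnS leq_eqVlt => /predU1P [ik | /c0 //].
by rewrite -ck0; congr c; apply: val_inj.
Qed.

Lemma weighted_sum_bound c : (forall i, `|c i| <= (m i.+1)%:Z) ->
  `|\sum_(i < n) c i * (weight m i)%:Z| <= (Ssum m n)%:Z.
Proof.
by move=> c_le; rewrite -(wsum_full c) -[Ssum m n]mul1n wsum_bound // => i; rewrite mul1n.
Qed.

Lemma weighted_sum_inj c d :
    (forall i, `|c i| <= (m i.+1)%:Z) -> (forall i, `|d i| <= (m i.+1)%:Z) ->
  \sum_(i < n) c i * (weight m i)%:Z = \sum_(i < n) d i * (weight m i)%:Z -> c =1 d.
Proof.
move=> c_le d_le /eqP; rewrite -subr_eq0 -sumrB.
under eq_bigr => i _ do rewrite -mulrBl.
rewrite -(wsum_full (c \- d)) => /eqP.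
move=> /wsum_eq0 cd0 i; apply/eqP; rewrite -subr_eq0; apply/eqP/cd0 => // j.
by rewrite (le_trans (ler_normB _ _)) // mulSn mul1n PoszD lerD.
Qed.

End WeightedSums.

Lemma phi_gt0 m n : (0 < n)%N -> (0 < m 1)%N -> (0 < phi m n)%N.
Proof.
by move=> n_gt0 m1_gt0; rewrite /phi big_ltn // /fval /= muln1 addn_gt0 m1_gt0.
Qed.

Section Packing.
Variables (n : nat) (m : nat -> nat) (v : nat).
Hypothesis m_gt0 : forall i, (1 <= i <= n)%N -> (0 < m i)%N.
Hypothesis v_gt1 : (1 < v)%N.
Hypothesis v_large : (2 * phi m n + 1 <= v)%N.

Local Notation A := {dffun forall i : 'I_n, 'I_(m i.+1)}.
Local Notation signs := {ffun 'I_n -> bool}.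
Implicit Types (a b : A) (s t : signs).

Definition sdigit s a i : int := (-1) ^+ s i * (a i).+1%:Z.

Definition point s a : int := \sum_(i < n) sdigit s a i * (weight m i)%:Z.

Lemma norm_sdigit s a i : `|sdigit s a i| = (a i).+1%:Z.
Proof. by rewrite normrM normrX normrN1 expr1n mul1r. Qed.

Lemma sdigit_le s a i : `|sdigit s a i| <= (m i.+1)%:Z.
Proof. by rewrite norm_sdigit lez_nat. Qed.

Lemma sdigit_inj s t a b i :
  sdigit s a i = sdigit t b i -> s i = t i /\ a i = b i.
Proof.
move=> eq_sdigit; have eq_ab : a i = b i.
  apply/val_inj/succn_inj/eqP.
  by rewrite -eqz_nat -(norm_sdigit s) -(norm_sdigit t) eq_sdigit.
split=> //; apply: signr_inj; apply: (@mulIf _ (a i).+1%:Z) => //.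
by move: eq_sdigit; rewrite /sdigit eq_ab.
Qed.

Lemma blockE a : block v a = [set (point s a)%:~R | s : signs].
Proof.
apply: eq_imset => s; rewrite /point rmorph_sum; apply: eq_bigr => i _.
by rewrite xval_weight ?m_gt0 ?ltn_ord // natrM !rmorphM /= intr_sign mulrA.
Qed.

Lemma intr_weighted_sum_inj (c d : 'I_n -> int) :
    (forall i, `|c i| <= (m i.+1)%:Z) -> (forall i, `|d i| <= (m i.+1)%:Z) ->
    ((\sum_(i < n) c i * (weight m i)%:Z)%:~R : 'Z_v) =
      (\sum_(i < n) d i * (weight m i)%:Z)%:~R ->
  c =1 d.
Proof.
move=> c_le d_le eq_sum; apply: (weighted_sum_inj c_le d_le).
apply: Zp_intr_inj eq_sum => //; rewrite (le_lt_trans (ler_normB _ _)) //.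
rewrite (le_lt_trans (lerD (weighted_sum_bound c_le) (weighted_sum_bound d_le))) //.
by rewrite -phi_Ssum; lia.
Qed.

Lemma intr_point_inj s t a b :
  ((point s a)%:~R : 'Z_v) = (point t b)%:~R -> s = t /\ a = b.
Proof.
move=> /(intr_weighted_sum_inj (sdigit_le s a) (sdigit_le t b)) eq_sdigit.
have {}eq_sdigit i := sdigit_inj (eq_sdigit i).
by split; apply/ffunP => i; case: (eq_sdigit i).
Qed.

Lemma block_inj : injective (@block v n m).
Proof.
move=> a b eq_ab; have : ((point [ffun=> false] a)%:~R : 'Z_v) \in block v a.
  by rewrite blockE imset_f.
by rewrite eq_ab blockE => /imsetP [t _] /intr_point_inj [].
Qed.

Lemma card_block a : #|block v a| = (2 ^ n)%N.
Proof.
rewrite blockE card_imset ?card_ffun ?card_bool ?card_ord //.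
by move=> s t /intr_point_inj [].
Qed.

Lemma card_family : #|lemma3_family v n m| = (\prod_(1 <= i < n.+1) m i)%N.
Proof.
rewrite card_imset; last exact: block_inj.
rewrite card_dep_ffun foldrE big_map big_enum /=.
under eq_bigr => i _ do rewrite card_ord.
by rewrite big_add1 big_mkord.
Qed.

Lemma block_disjoint a b : block v a != block v b ->
  [disjoint block v a & block v b].
Proof.
apply: contraR => /pred0Pn [_ /andP [/[!blockE] /imsetP [s _ ->]]].
by case/imsetP => t _ /intr_point_inj [_ ->].
Qed.

Definition mid_digit s t a i : int := (s i == t i)%:Z * sdigit s a i.

Lemma mid_digit_le s t a i : `|mid_digit s t a i| <= (m i.+1)%:Z.
Proof.
rewrite normrM (le_trans _ (sdigit_le s a i)) // ler_piMl //.
by case: (_ == _).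
Qed.

Lemma point_add s t a :
  point s a + point t a = 2 * \sum_(i < n) mid_digit s t a i * (weight m i)%:Z.
Proof.
rewrite /point -big_split mulr_sumr; apply: eq_bigr => i _.
by rewrite /mid_digit /sdigit; case: (s i) (t i) => -[] /=; ring.
Qed.

Hypothesis v_odd : odd v.

Lemma halfsum_notin_block a b x y : x \in block v a -> y \in block v a -> x != y ->
  (x + y) * 2%:R^-1 \notin block v b.
Proof.
rewrite !blockE => /imsetP [s _ ->] /imsetP [t _ ->] neq_xy.
have neq_st : s != t by apply: contraNneq neq_xy => ->.
have unit2 : (2%:R : 'Z_v) \is a GRing.unit by rewrite unitZpE // coprimen2.
rewrite -rmorphD point_add rmorphM /= mulrC mulKr //.
apply/imsetP => -[r _].
move=> /(intr_weighted_sum_inj (mid_digit_le s t a) (sdigit_le r b)) eq_digit.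
have [i neq_sti | eq_st] := pickP (fun i => s i != t i); last first.
  by case/negP: neq_st; apply/eqP/ffunP => i; apply/eqP/negbFE/eq_st.
move: (eq_digit i) (norm_sdigit r b i); rewrite /mid_digit (negPf neq_sti) mul0r => <-.
by rewrite normr0.
Qed.

End Packing.

Theorem lemma3 (n : nat) (m : nat -> nat) (v : nat) :
  (0 < n)%N ->
  (forall i, (1 <= i <= n)%N -> (0 < m i)%N) ->
  odd v -> (2 * phi m n + 1 <= v)%N ->
  @nhs_disjoint_packing v (2 ^ n) (\prod_(1 <= i < n.+1) m i) (@lemma3_family v n m).
Proof.
move=> n_gt0 m_gt0 v_odd v_large.
have v_gt1 : (1 < v)%N by have := phi_gt0 n_gt0 (m_gt0 1 n_gt0); lia.
split.
- exact: card_family.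
- by move=> _ /imsetP [a _ ->]; apply: card_block.
- by move=> _ _ /imsetP [a _ ->] /imsetP [b _ ->]; apply: block_disjoint.
- move=> _ x y /imsetP [a _ ->] xa ya neq_xy _ /imsetP [b _ ->].
  exact: halfsum_notin_block xa ya neq_xy.
Qed.
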